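(* Let $G$ be a Roelcke-precompact Polish group. For $i\in\mathbf N$ let $X_i$ be minimal complete $G$-spaces and $x_i,y_i\in X_i$. Then there exist $\xi_i\in\widehat G_L$ ($i\in\mathbf N$) such that $\xi_ix_i=\xi_{i+1}y_i$ for all $i$. In particular, if $I$ is countable, $X$ is a minimal complete $G$-space and $x_i\in X$ for $i\in I$, then there exist $\xi_i\in\widehat G_L$ and $z\in X$ with $z=\xi_ix_i$ for all $i\in I$.
   Context: A complete $G$-space is a nonempty complete metric space with a jointly continuous action of $G$ by isometries; it is minimal if every orbit is dense. $\widehat G_L$ is the completion of $G$ with respect to a compatible left-invariant metric; the action of $G$ on any complete $G$-space extends continuously to an action of $\widehat G_L$. $G$ is Roelcke-precompact if for every open neighbourhood $U$ of $1$ there is finite $F\subseteq G$ with $UFU=G$. *)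

From Stdlib Require Import Reals List ClassicalEpsilon.
Open Scope R_scope.

Record is_metric {T : Type} (d : T -> T -> R) : Prop := {
  md_nonneg : forall x y, 0 <= d x y;
  md_refl : forall x, d x x = 0;
  md_sep : forall x y, d x y = 0 -> x = y;
  md_sym : forall x y, d x y = d y x;
  md_tri : forall x y z, d x z <= d x y + d y z }.

Definition is_open {T : Type} (d : T -> T -> R) (U : T -> Prop) : Prop :=
  forall x, U x -> exists eps, 0 < eps /\ forall y, d x y < eps -> U y.

Definition converges {T : Type} (d : T -> T -> R) (u : nat -> T) (l : T) : Prop :=
  forall eps, 0 < eps -> exists N, forall n, (N <= n)%nat -> d (u n) l < eps.

Definition cauchy {T : Type} (d : T -> T -> R) (u : nat -> T) : Prop :=
  forall eps, 0 < eps -> exists N, forall n m, (N <= n)%nat -> (N <= m)%nat ->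
    d (u n) (u m) < eps.

Definition complete {T : Type} (d : T -> T -> R) : Prop :=
  forall u, cauchy d u -> exists l, converges d u l.

Definition separable {T : Type} (d : T -> T -> R) : Prop :=
  exists s : nat -> T, forall x eps, 0 < eps -> exists n, d x (s n) < eps.

Definition same_topology {T : Type} (d1 d2 : T -> T -> R) : Prop :=
  forall U, is_open d1 U <-> is_open d2 U.

(** A metrizable topological group, given with a compatible left-invariant
    metric gd (its topology is the one induced by gd). *)
Record MetricGroup := {
  gcar :> Type;
  gmul : gcar -> gcar -> gcar;
  ginv : gcar -> gcar;
  gone : gcar;
  gd : gcar -> gcar -> R;
  gmulA : forall x y z, gmul x (gmul y z) = gmul (gmul x y) z;
  gmul1l : forall x, gmul gone x = x;
  gmulVl : forall x, gmul (ginv x) x = gone;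
  gd_metric : is_metric gd;
  gd_left_inv : forall g x y, gd (gmul g x) (gmul g y) = gd x y;
  gmul_cont : forall x y eps, 0 < eps -> exists delta, 0 < delta /\
     forall x' y', gd x x' < delta -> gd y y' < delta ->
       gd (gmul x y) (gmul x' y') < eps;
  ginv_cont : forall x eps, 0 < eps -> exists delta, 0 < delta /\
     forall x', gd x x' < delta -> gd (ginv x) (ginv x') < eps }.

Definition polish (G : MetricGroup) : Prop :=
  separable (gd G) /\
  exists rho : G -> G -> R, is_metric rho /\ complete rho /\ same_topology rho (gd G).

Definition roelcke_precompact (G : MetricGroup) : Prop :=
  forall U : G -> Prop, is_open (gd G) U -> U (gone G) ->
    exists F : list G, forall g : G, exists u f v,
      U u /\ In f F /\ U v /\ g = gmul G (gmul G u f) v.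

Record GSpace (G : MetricGroup) := {
  scar :> Type;
  sd : scar -> scar -> R;
  sact : G -> scar -> scar;
  sd_metric : is_metric sd;
  s_complete : complete sd;
  s_nonempty : inhabited scar;
  sact_one : forall x, sact (gone G) x = x;
  sact_mul : forall g h x, sact (gmul G g h) x = sact g (sact h x);
  sact_isom : forall g x y, sd (sact g x) (sact g y) = sd x y;
  sact_cont : forall g x eps, 0 < eps -> exists delta, 0 < delta /\
     forall g' x', gd G g g' < delta -> sd x x' < delta ->
       sd (sact g x) (sact g' x') < eps }.

Arguments sd {G} _ _ _.
Arguments sact {G} _ _ _.

Definition minimal {G : MetricGroup} (X : GSpace G) : Prop :=
  forall x y : X, forall eps, 0 < eps -> exists g : G, sd X (sact X g x) y < eps.

(** The left completion: its points are represented by gd-Cauchy sequences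
    (Cauchy sequences for the left-invariant metric); the equivalence
    relation identifying them is irrelevant for the statement. *)
Definition GhatL (G : MetricGroup) := { u : nat -> G | cauchy (gd G) u }.

(** Extended action: xi x = lim_n (u_n x) (chosen via epsilon; the limit
    exists and is unique). *)
Definition hact {G : MetricGroup} (X : GSpace G) (xi : GhatL G) (x : X) : X :=
  epsilon (inhabits x)
    (fun z => converges (sd X) (fun n => sact X (proj1_sig xi n) x) z).

(* Roelcke precompactness says that, for every n and every neighbourhood of the
   identity, the (n+1)-tuples (g_0, ..., g_n) fall into finitely many classes up
   to a common left translation and small right perturbations of each
   coordinate.  Consequently, for every n there is a threshold eta_n such that
   whenever the defects d(g_i x_i, g_(i+1) y_i), i < n, are all below eta_n,
   they can be made arbitrarily small by moving each g_i on the right by less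
   than 2^-n.  Using minimality of X_n to take care of the new index at each
   stage, one builds tuples whose coordinates are Cauchy for the left-invariant
   metric and whose defects tend to 0; their limits xi_i in the left completion
   satisfy xi_i x_i = xi_(i+1) y_i.  The countable statement follows by applying
   this to an enumeration (a_n) of the points with x_n = a_n, y_n = a_(n+1). *)

From Stdlib Require Import Reals List Lra Lia Classical ClassicalEpsilon.
Open Scope R_scope.

Local Notation "a ** b" := (gmul _ a b) (at level 40, left associativity).

Lemma gmulVr {G : MetricGroup} (a : G) : a ** ginv G a = gone G.
Proof.
  set (e := a ** ginv G a).
  assert (He : e ** e = e).
  { unfold e. rewrite <- gmulA, (gmulA G (ginv G a) a), gmulVl, gmul1l. reflexivity. }
  rewrite <- (gmul1l G e), <- (gmulVl G e) at 1.
  rewrite <- gmulA, He. apply gmulVl.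
Qed.

Lemma gmul1r {G : MetricGroup} (a : G) : a ** gone G = a.
Proof. rewrite <- (gmulVl G a), gmulA, gmulVr, gmul1l. reflexivity. Qed.

Lemma gmulKV {G : MetricGroup} (x a : G) : x ** ginv G a ** a = x.
Proof. rewrite <- gmulA, gmulVl, gmul1r. reflexivity. Qed.

Lemma gmulK {G : MetricGroup} (x a : G) : x ** a ** ginv G a = x.
Proof. rewrite <- gmulA, gmulVr, gmul1r. reflexivity. Qed.

Lemma ginv1 {G : MetricGroup} : ginv G (gone G) = gone G.
Proof. rewrite <- (gmul1r (ginv G (gone G))). apply gmulVl. Qed.

Ltac gsimpl :=
  repeat (rewrite ?gmulA, ?gmulKV, ?gmulK, ?gmul1r, ?gmul1l, ?gmulVl, ?gmulVr).

Definition gnorm {G : MetricGroup} (a : G) : R := gd G (gone G) a.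

Lemma gnorm1 {G : MetricGroup} : gnorm (gone G) = 0.
Proof. apply (md_refl _ (gd_metric G)). Qed.

Lemma gd_gnorm {G : MetricGroup} (a b : G) : gd G a b = gnorm (ginv G a ** b).
Proof.
  unfold gnorm. rewrite <- (gd_left_inv G a (gone G) (ginv G a ** b)).
  gsimpl. reflexivity.
Qed.

Lemma gnorm_mul {G : MetricGroup} (a b : G) : gnorm (a ** b) <= gnorm a + gnorm b.
Proof.
  unfold gnorm. rewrite <- (gd_left_inv G a (gone G) b), gmul1r.
  apply (md_tri _ (gd_metric G)).
Qed.

Lemma gnorm_inv {G : MetricGroup} (a : G) : gnorm (ginv G a) = gnorm a.
Proof.
  unfold gnorm. rewrite <- (gd_left_inv G a), gmul1r, gmulVr.
  apply (md_sym _ (gd_metric G)).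
Qed.

Lemma gnorm_ball_open {G : MetricGroup} (r : R) :
  is_open (gd G) (fun a : G => gnorm a < r).
Proof.
  intros a Ha. exists (r - gnorm a). split; [lra|].
  intros b Hb. pose proof (md_tri _ (gd_metric G) (gone G) a b). unfold gnorm in *. lra.
Qed.

Lemma gnorm_conj_small {G : MetricGroup} (t : G) eps : 0 < eps ->
  exists rho, 0 < rho /\
    forall c, gnorm c < rho -> gnorm (ginv G t ** (ginv G c ** t)) < eps.
Proof.
  intros Heps.
  destruct (gmul_cont G (gone G) t eps Heps) as [d1 [Hd1 Hmul]].
  destruct (ginv_cont G (gone G) d1 Hd1) as [d2 [Hd2 Hinv]].
  exists d2. split; [exact Hd2|]. intros c Hc.
  rewrite <- gd_gnorm, <- (gmul1l G t) at 1.
  apply Hmul; [|rewrite (md_refl _ (gd_metric G)); exact Hd1].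
  rewrite <- ginv1. apply Hinv, Hc.
Qed.

Lemma gnorm_conj_small_list {G : MetricGroup} (L : list G) eps : 0 < eps ->
  exists rho, 0 < rho /\ forall t, In t L ->
    forall c, gnorm c < rho -> gnorm (ginv G t ** (ginv G c ** t)) < eps.
Proof.
  intros Heps. induction L as [|t L [rho [Hrho IH]]].
  - exists 1. split; [lra|]. intros t [].
  - destruct (gnorm_conj_small t eps Heps) as [rho' [Hrho' Ht]].
    exists (Rmin rho rho'). split; [apply Rmin_pos; assumption|].
    intros s [<-|Hs] c Hc.
    + apply Ht. pose proof (Rmin_r rho rho'). lra.
    + apply IH; [exact Hs|]. pose proof (Rmin_l rho rho'). lra.
Qed.

Lemma roelcke_tuple_cover {G : MetricGroup} (HR : roelcke_precompact G) n delta :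
  0 < delta -> exists T : list (nat -> G), forall g : nat -> G, exists h t b,
    In t T /\ forall i, (i <= n)%nat -> gnorm (b i) < delta /\ g i = h ** (t i ** b i).
Proof.
  revert delta. induction n as [|n IH]; intros delta Hdelta.
  - exists ((fun _ => gone G) :: nil). intros g.
    exists (g 0%nat), (fun _ => gone G), (fun _ => gone G). split; [left; reflexivity|].
    intros i Hi. replace i with 0%nat by lia. rewrite gnorm1. split; [lra|].
    gsimpl. reflexivity.
  - destruct (IH (delta / 2)) as [T HT]; [lra|].
    destruct (gnorm_conj_small_list (flat_map (fun t => map t (seq 0 (S n))) T) (delta / 2))
      as [rho [Hrho Hconj]]; [lra|].
    destruct (HR (fun a => gnorm a < Rmin rho (delta / 2))) as [F HF].
    { apply gnorm_ball_open. }
    { rewrite gnorm1. apply Rmin_pos; lra. }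
    exists (flat_map (fun t => map (fun f i => if Nat.eqb i (S n) then f else t i) F) T).
    intros g. destruct (HT g) as [h [t [b [Ht Hb]]]].
    (* Write h^-1 g_(n+1) = u f v; the small left factor u is absorbed into h,
       at the price of conjugating the old b_i by the finitely many t_i. *)
    destruct (HF (ginv G h ** g (S n))) as [u [f [v [Hu [Hf [Hv Huv]]]]]].
    exists (h ** u), (fun i => if Nat.eqb i (S n) then f else t i),
      (fun i => if Nat.eqb i (S n) then v else ginv G (t i) ** (ginv G u ** (t i ** b i))).
    split.
    { apply in_flat_map. exists t. split; [exact Ht|].
      apply in_map_iff. exists f. split; [reflexivity|exact Hf]. }
    intros i Hi. destruct (Nat.eqb_spec i (S n)) as [->|Hne].
    + split; [pose proof (Rmin_r rho (delta / 2)); lra|].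
      transitivity (h ** (ginv G h ** g (S n))); [gsimpl; reflexivity|].
      rewrite Huv. gsimpl. reflexivity.
    + destruct (Hb i ltac:(lia)) as [Hbi Hgi]. split.
      * replace (ginv G (t i) ** (ginv G u ** (t i ** b i)))
          with (ginv G (t i) ** (ginv G u ** t i) ** b i) by (gsimpl; reflexivity).
        eapply Rle_lt_trans; [apply gnorm_mul|].
        assert (gnorm (ginv G (t i) ** (ginv G u ** t i)) < delta / 2).
        { apply Hconj; [|pose proof (Rmin_l rho (delta / 2)); lra].
          apply in_flat_map. exists t. split; [exact Ht|].
          apply in_map_iff. exists i. split; [reflexivity|]. apply in_seq. lia. }
        lra.
      * rewrite Hgi. gsimpl. reflexivity.
Qed.

Lemma list_uniform_threshold {A : Type} (P : A -> R -> Prop) (L : list A) :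
  (forall a r s, P a r -> r <= s -> P a s) ->
  exists eta, 0 < eta /\ forall a, In a L -> (forall r, 0 < r -> P a r) \/ ~ P a eta.
Proof.
  intros Hmono. induction L as [|a L [eta [Heta IH]]].
  - exists 1. split; [lra|]. intros a [].
  - destruct (classic (forall r, 0 < r -> P a r)) as [Hall|Hnot].
    + exists eta. split; [exact Heta|].
      intros b [<-|Hb]; [left; exact Hall|exact (IH b Hb)].
    + apply not_all_ex_not in Hnot as [r Hr]. apply imply_to_and in Hr as [Hr HnP].
      exists (Rmin eta r). split; [apply Rmin_pos; assumption|].
      intros b [<-|Hb].
      * right. intros HP. apply HnP, (Hmono _ _ _ HP), Rmin_r.
      * destruct (IH b Hb) as [Hall|HnP']; [left; exact Hall|right].
        intros HP. apply HnP', (Hmono _ _ _ HP), Rmin_l.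
Qed.

Lemma converges_unique {T : Type} (d : T -> T -> R) (Hd : is_metric d) u l1 l2 :
  converges d u l1 -> converges d u l2 -> l1 = l2.
Proof.
  intros H1 H2. apply (md_sep _ Hd), Rle_antisym; [|apply (md_nonneg _ Hd)].
  apply Rnot_lt_le. intros Hpos.
  destruct (H1 (d l1 l2 / 2) ltac:(lra)) as [N1 HN1].
  destruct (H2 (d l1 l2 / 2) ltac:(lra)) as [N2 HN2].
  specialize (HN1 (Nat.max N1 N2) ltac:(lia)). specialize (HN2 (Nat.max N1 N2) ltac:(lia)).
  pose proof (md_tri _ Hd l1 (u (Nat.max N1 N2)) l2).
  rewrite (md_sym _ Hd l1 (u (Nat.max N1 N2))) in H. lra.
Qed.

Lemma converges_close {T : Type} (d : T -> T -> R) (Hd : is_metric d) u v l :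
  converges d u l ->
  (forall eps, 0 < eps -> exists N, forall m, (N <= m)%nat -> d (u m) (v m) < eps) ->
  converges d v l.
Proof.
  intros Hu Huv eps Heps.
  destruct (Hu (eps / 2) ltac:(lra)) as [N1 HN1].
  destruct (Huv (eps / 2) ltac:(lra)) as [N2 HN2].
  exists (Nat.max N1 N2). intros m Hm.
  pose proof (md_tri _ Hd (v m) (u m) l). rewrite (md_sym _ Hd (v m) (u m)) in H.
  specialize (HN1 m ltac:(lia)). specialize (HN2 m ltac:(lia)). lra.
Qed.

Lemma half_pow_pos n : 0 < (/2) ^ n.
Proof. apply pow_lt. lra. Qed.

Lemma half_pow_small eps : 0 < eps -> exists N, forall m, (N <= m)%nat -> (/2) ^ m < eps.
Proof.
  intros Heps.
  destruct (pow_lt_1_zero (/2) ltac:(rewrite Rabs_right; lra) eps Heps) as [N HN].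
  exists N. intros m Hm. specialize (HN m Hm).
  rewrite Rabs_right in HN; [exact HN|]. apply Rle_ge, pow_le. lra.
Qed.

Lemma cauchy_of_geometric_steps {T : Type} (d : T -> T -> R) (Hd : is_metric d)
  (u : nat -> T) K :
  (forall m, (K <= m)%nat -> d (u m) (u (S m)) < (/2) ^ m) -> cauchy d u.
Proof.
  intros Hstep.
  assert (Hsum : forall k m, (K <= m)%nat ->
            d (u m) (u (m + k)%nat) <= 2 * ((/2) ^ m - (/2) ^ (m + k))).
  { induction k as [|k IH]; intros m Hm.
    - rewrite Nat.add_0_r, (md_refl _ Hd). lra.
    - eapply Rle_trans; [apply (md_tri _ Hd _ (u (m + k)%nat))|].
      replace (m + S k)%nat with (S (m + k)) by lia.
      pose proof (Hstep (m + k)%nat ltac:(lia)). pose proof (IH m Hm).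
      simpl. lra. }
  assert (Htail : forall m n, (K <= m)%nat -> (m <= n)%nat -> d (u m) (u n) <= 2 * (/2) ^ m).
  { intros m n Hm Hn. replace n with (m + (n - m))%nat by lia.
    pose proof (Hsum (n - m)%nat m Hm). pose proof (half_pow_pos (m + (n - m))). lra. }
  intros eps Heps.
  destruct (half_pow_small (eps / 4) ltac:(lra)) as [N HN].
  set (M := Nat.max K N).
  exists M. intros n m Hn Hm.
  eapply Rle_lt_trans; [apply (md_tri _ Hd _ (u M))|].
  rewrite (md_sym _ Hd (u n)).
  pose proof (Htail M n ltac:(lia) Hn). pose proof (Htail M m ltac:(lia) Hm).
  pose proof (HN M ltac:(lia)). lra.
Qed.

Lemma dependent_choice_nat {A : Type} (I : nat -> A -> Prop) (Q : nat -> A -> A -> Prop) a0 :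
  I 0%nat a0 -> (forall n a, I n a -> exists a', I (S n) a' /\ Q n a a') ->
  exists s : nat -> A, forall n, I n (s n) /\ Q n (s n) (s (S n)).
Proof.
  intros H0 Hstep.
  pose (next := fun n (p : {a | I n a}) =>
    constructive_indefinite_description _ (Hstep n _ (proj2_sig p))).
  pose (s := nat_rect (fun n => {a | I n a}) (exist _ a0 H0)
    (fun n p => exist _ (proj1_sig (next n p)) (proj1 (proj2_sig (next n p))))).
  exists (fun n => proj1_sig (s n)). intros n. split.
  - exact (proj2_sig (s n)).
  - exact (proj2 (proj2_sig (next n (s n)))).
Qed.

Lemma orbit_cauchy {G : MetricGroup} (X : GSpace G) (u : nat -> G) (p : X) :
  cauchy (gd G) u -> cauchy (sd X) (fun n => sact X (u n) p).
Proof.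
  intros Hu eps Heps.
  destruct (sact_cont G X (gone G) p eps Heps) as [delta [Hdelta Hcont]].
  destruct (Hu delta Hdelta) as [N HN]. exists N. intros n m Hn Hm.
  rewrite <- (sact_isom G X (ginv G (u n))), <- !sact_mul, gmulVl, sact_one.
  rewrite <- (sact_one G X p) at 1. apply Hcont.
  - rewrite gd_gnorm, ginv1, gmul1l, <- gd_gnorm. apply HN; assumption.
  - rewrite (md_refl _ (sd_metric G X)). exact Hdelta.
Qed.

Lemma hact_spec {G : MetricGroup} (X : GSpace G) (xi : GhatL G) (p : X) :
  converges (sd X) (fun n => sact X (proj1_sig xi n) p) (hact X xi p).
Proof.
  unfold hact. apply epsilon_spec, (s_complete G X), orbit_cauchy, (proj2_sig xi).
Qed.

Section Chain.

Variables (G : MetricGroup) (HR : roelcke_precompact G).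
Variables (X : nat -> GSpace G) (Hmin : forall i, minimal (X i)).
Variables (x y : forall i, X i).

Definition defect (g : nat -> G) (i : nat) : R :=
  sd (X i) (sact (X i) (g i) (x i)) (sact (X i) (g (S i)) (y i)).

Lemma defect_mull (h : G) (g : nat -> G) i : defect (fun j => h ** g j) i = defect g i.
Proof. unfold defect. rewrite !sact_mul, sact_isom. reflexivity. Qed.

Lemma defect_eq_on n (g g' : nat -> G) :
  (forall j, (j <= n)%nat -> g j = g' j) -> forall i, (i < n)%nat -> defect g i = defect g' i.
Proof. intros Hgg' i Hi. unfold defect. rewrite !Hgg' by lia. reflexivity. Qed.

Definition refinable n delta (t : nat -> G) theta : Prop :=
  exists b : nat -> G, (forall i, (i <= n)%nat -> gnorm (b i) < delta) /\
    forall i, (i < n)%nat -> defect (fun j => t j ** b j) i < theta.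

Lemma refinable_mono n delta t theta theta' :
  refinable n delta t theta -> theta <= theta' -> refinable n delta t theta'.
Proof.
  intros [b [Hb Hdef]] Hle. exists b. split; [exact Hb|].
  intros i Hi. specialize (Hdef i Hi). lra.
Qed.

Definition refines_below n delta eta : Prop :=
  forall g : nat -> G, (forall i, (i < n)%nat -> defect g i < eta) ->
    forall theta, 0 < theta -> exists r : nat -> G,
      (forall i, (i <= n)%nat -> gnorm (r i) < delta) /\
      forall i, (i < n)%nat -> defect (fun j => g j ** r j) i < theta.

Lemma refinement_threshold n delta : 0 < delta ->
  exists eta, 0 < eta /\ refines_below n delta eta.
Proof.
  intros Hdelta.
  destruct (roelcke_tuple_cover HR n (delta / 2)) as [T HT]; [lra|].
  destruct (list_uniform_threshold (refinable n (delta / 2)) T (refinable_mono n (delta / 2)))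
    as [eta [Heta Hgap]].
  exists eta. split; [exact Heta|]. intros g Hg theta Htheta.
  destruct (HT g) as [h [t [b [Ht Hb]]]].
  assert (Hgtb : forall b' : nat -> G, forall i, (i < n)%nat ->
            defect (fun j => g j ** (ginv G (b j) ** b' j)) i = defect (fun j => t j ** b' j) i).
  { intros b' i Hi. rewrite <- (defect_mull h (fun j => t j ** b' j)).
    apply (defect_eq_on n); [|exact Hi].
    intros j Hj. destruct (Hb j Hj) as [_ ->]. gsimpl. reflexivity. }
  destruct (Hgap t Ht) as [Hgood|Hbad].
  - destruct (Hgood theta Htheta) as [b' [Hb' Hdef]].
    exists (fun j => ginv G (b j) ** b' j). split.
    + intros i Hi. eapply Rle_lt_trans; [apply gnorm_mul|].
      rewrite gnorm_inv. destruct (Hb i Hi) as [Hbi _]. specialize (Hb' i Hi). lra.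
    + intros i Hi. rewrite Hgtb by exact Hi. apply Hdef, Hi.
  - exfalso. apply Hbad. exists b. split; [intros i Hi; apply (Hb i Hi)|].
    intros i Hi. rewrite <- (Hgtb b i Hi).
    rewrite (defect_eq_on n _ g); [apply Hg, Hi| |exact Hi].
    intros j _. gsimpl. reflexivity.
Qed.

Section Approximants.

Variable eta : nat -> R.
Hypothesis Heta : forall n, 0 < eta n /\ refines_below n ((/2) ^ n) (eta n).

Let tol n := Rmin (eta n) ((/2) ^ n).

Lemma tol_pos n : 0 < tol n.
Proof. apply Rmin_pos; [apply Heta|apply half_pow_pos]. Qed.

Lemma chain_step n (g : nat -> G) :
  (forall i, (i < n)%nat -> defect g i < tol n) ->
  exists g', (forall i, (i < S n)%nat -> defect g' i < tol (S n)) /\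
    forall j, (j <= n)%nat -> gd G (g j) (g' j) < (/2) ^ n.
Proof.
  intros Hg.
  destruct (proj2 (Heta n) g) with (theta := tol (S n)) as [r [Hr Hdef]].
  { intros i Hi. specialize (Hg i Hi). pose proof (Rmin_l (eta n) ((/2) ^ n)).
    unfold tol in Hg. lra. }
  { apply tol_pos. }
  destruct (Hmin n (y n) (sact (X n) (g n ** r n) (x n)) (tol (S n)) (tol_pos _)) as [k Hk].
  pose (g' := fun j => if Nat.leb j n then g j ** r j else k).
  assert (Hg' : forall j, (j <= n)%nat -> g' j = g j ** r j).
  { intros j Hj. unfold g'. rewrite (proj2 (Nat.leb_le j n) Hj). reflexivity. }
  exists g'. split.
  - intros i Hi. destruct (Nat.eq_dec i n) as [->|Hne].
    + unfold defect. rewrite Hg' by lia.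
      replace (g' (S n)) with k
        by (unfold g'; rewrite (proj2 (Nat.leb_gt (S n) n) (Nat.lt_succ_diag_r n)); reflexivity).
      rewrite (md_sym _ (sd_metric G (X n))). exact Hk.
    + rewrite (defect_eq_on n g' (fun j => g j ** r j) Hg' i) by lia. apply Hdef. lia.
  - intros j Hj. rewrite Hg', gd_gnorm by exact Hj. gsimpl. apply Hr, Hj.
Qed.

Lemma chain_approximants : exists s : nat -> nat -> G,
  (forall j, cauchy (gd G) (fun m => s m j)) /\
  forall i m, (i < m)%nat -> defect (s m) i < (/2) ^ m.
Proof.
  destruct (dependent_choice_nat
    (fun n (g : nat -> G) => forall i, (i < n)%nat -> defect g i < tol n)
    (fun n g g' => forall j, (j <= n)%nat -> gd G (g j) (g' j) < (/2) ^ n)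
    (fun _ => gone G)) as [s Hs].
  - intros i Hi. lia.
  - exact chain_step.
  - exists s. split.
    + intros j. apply (cauchy_of_geometric_steps _ (gd_metric G) _ j).
      intros m Hm. apply (proj2 (Hs m)), Hm.
    + intros i m Hi. eapply Rlt_le_trans; [apply (proj1 (Hs m) i Hi)|]. apply Rmin_r.
Qed.

End Approximants.

Lemma chain_exists : exists xi : nat -> GhatL G,
  forall i, hact (X i) (xi i) (x i) = hact (X i) (xi (S i)) (y i).
Proof.
  destruct (choice (fun n e => 0 < e /\ refines_below n ((/2) ^ n) e)) as [eta Heta].
  { intros n. apply refinement_threshold, half_pow_pos. }
  destruct (chain_approximants eta Heta) as [s [Hcauchy Hdefect]].
  exists (fun j => exist _ (fun m => s m j) (Hcauchy j)). intros i.
  apply (converges_unique _ (sd_metric G (X i)) (fun m => sact (X i) (s m (S i)) (y i))).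
  - apply (converges_close _ (sd_metric G (X i)) (fun m => sact (X i) (s m i) (x i))).
    + exact (hact_spec (X i) (exist _ _ (Hcauchy i)) (x i)).
    + intros eps Heps. destruct (half_pow_small eps Heps) as [N HN].
      exists (Nat.max N (S i)). intros m Hm.
      pose proof (Hdefect i m ltac:(lia)). pose proof (HN m ltac:(lia)).
      unfold defect in *. lra.
  - exact (hact_spec (X i) (exist _ _ (Hcauchy (S i))) (y i)).
Qed.

End Chain.

Lemma common_translate {G : MetricGroup} (HR : roelcke_precompact G)
  (X : GSpace G) (Hmin : minimal X) (a : nat -> X) :
  exists (xi : nat -> GhatL G) (z : X), forall n, z = hact X (xi n) (a n).
Proof.
  destruct (chain_exists G HR (fun _ => X) (fun _ => Hmin) a (fun n => a (S n))) as [xi Hxi].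
  exists xi, (hact X (xi 0%nat) (a 0%nat)).
  intros n. induction n as [|n IH]; [reflexivity|]. rewrite IH. apply Hxi.
Qed.

Lemma extend_along_injection {I A : Type} (c : I -> nat) (a0 : A) (x : I -> A) :
  (forall i j, c i = c j -> i = j) -> exists a : nat -> A, forall i, a (c i) = x i.
Proof.
  intros Hc.
  destruct (choice (fun n v => forall i, c i = n -> v = x i)) as [a Ha].
  - intros n. destruct (classic (exists i, c i = n)) as [[i Hi]|Hnone].
    + exists (x i). intros j Hj. rewrite (Hc j i) by congruence. reflexivity.
    + exists a0. intros j Hj. exfalso. apply Hnone. exists j. exact Hj.
  - exists a. intros i. apply Ha. reflexivity.
Qed.

Theorem lemma1p10 (G : MetricGroup) (HP : polish G) (HR : roelcke_precompact G) :
  (forall (X : nat -> GSpace G), (forall i, minimal (X i)) ->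
   forall (x y : forall i, X i),
   exists xi : nat -> GhatL G,
     forall i, hact (X i) (xi i) (x i) = hact (X i) (xi (S i)) (y i))
  /\
  (forall (I : Type) (c : I -> nat), (forall i j, c i = c j -> i = j) ->
   forall (X : GSpace G), minimal X ->
   forall x : I -> X,
   exists (xi : I -> GhatL G) (z : X), forall i, z = hact X (xi i) (x i)).
Proof.
  split.
  - intros X Hmin x y. exact (chain_exists G HR X Hmin x y).
  - intros I c Hc X Hmin x.
    destruct (s_nonempty G X) as [x0].
    destruct (extend_along_injection c x0 x Hc) as [a Ha].
    destruct (common_translate HR X Hmin a) as [xi [z Hz]].
    exists (fun i => xi (c i)), z. intros i. rewrite <- Ha. apply Hz.
Qed.
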